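(* Let $h$ be a positive integer and $L$ an $h$-modular lattice with zero. Let $\mathcal{A}$ be the set of all antitone maps $x\colon \mathrm{J}(K)\to L$ with finite range. Then for every $x\in\mathcal{A}$, the map $x^{(1)}$ also belongs to $\mathcal{A}$.
   Context: $K$ is the lattice whose join-irreducible elements are $c$, $a_n$, $b_n$ ($n<\omega$): concretely, with $A_m=\{a_k:k\geq m\}$, $B_n=\{b_k:k\geq n\}$, $C=\{c\}$, $K$ consists of $\varnothing$, $C$, all $A_m$, all $B_n$, and all $C\cup A_m\cup B_n$ with $|m-n|\leq1$, ordered by inclusion, and $a_n$, $b_n$, $c$ are identified with $A_n$, $B_n$, $C$. Thus $\mathrm{J}(K)=\{c\}\cup\{a_n\}\cup\{b_n\}$ with $a_0>a_1>\cdots$, $b_0>b_1>\cdots$, and no other comparabilities. A map $x$ is antitone if $p\leq q$ implies $x(p)\geq x(q)$. For $x\in\mathcal{A}$ the sequences $(x(a_n))$, $(x(b_n))$ are increasing and eventually constant; denote their limits by $x(a_\infty)$, $x(b_\infty)$. Define $x^{(1)}\colon\mathrm{J}(K)\to L$ by $x^{(1)}(c)=x(c)\vee(x(a_\infty)\wedge x(b_\infty))$, $x^{(1)}(a_0)=x(a_0)$, $x^{(1)}(b_0)=x(b_0)$, $x^{(1)}(a_{n+1})=x(a_{n+1})\vee(x(b_n)\wedge x(c))$, $x^{(1)}(b_{n+1})=x(b_{n+1})\vee(x(a_n)\wedge x(c))$ for $n<\omega$. A lattice $L$ is $h$-modular if $u^{(h+1)}=u^{(h)}$ for all $u\in L^3$,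 where $\langle x,y,z\rangle^{(1)}=\langle x\vee(y\wedge z),y\vee(x\wedge z),z\vee(x\wedge y)\rangle$ and $u^{(k+1)}=(u^{(k)})^{(1)}$. *)

From HB Require Import structures.
From mathcomp Require Import all_boot all_order.
From Stdlib Require Import ClassicalEpsilon.
Set Implicit Arguments. Unset Strict Implicit. Unset Printing Implicit Defensive.
Import Order.Theory.
Local Open Scope order_scope.

(* Join-irreducible elements of K: c, a_n, b_n (n < omega). *)
Inductive JK : Type := jc | ja of nat | jb of nat.

Definition le_JK (p q : JK) : Prop :=
  match p, q with
  | jc, jc => True
  | ja m, ja n => (n <= m)%N
  | jb m, jb n => (n <= m)%N
  | _, _ => False
  end.

Section Defs.
Context {d : Order.disp_t} {L : bLatticeType d}.

Definition antitone (x : JK -> L) : Prop :=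
  forall p q, le_JK p q -> x q <= x p.

Definition finite_range (x : JK -> L) : Prop :=
  exists s : seq L, forall p, x p \in s.

Definition inA (x : JK -> L) : Prop := antitone x /\ finite_range x.

(* the eventual value of an eventually constant sequence (chosen by epsilon;
   for eventually constant sequences it is the unique eventual value) *)
Definition eventual (f : nat -> L) : L :=
  epsilon (inhabits \bot) (fun v => exists N, forall n, (N <= n)%N -> f n = v).

Definition x_ainf (x : JK -> L) : L := eventual (fun n => x (ja n)).
Definition x_binf (x : JK -> L) : L := eventual (fun n => x (jb n)).

Definition x1 (x : JK -> L) : JK -> L := fun p =>
  match p with
  | jc => x jc `|` (x_ainf x `&` x_binf x)
  | ja 0 => x (ja 0)
  | jb 0 => x (jb 0)
  | ja n.+1 => x (ja n.+1) `|` (x (jb n) `&` x jc)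
  | jb n.+1 => x (jb n.+1) `|` (x (ja n) `&` x jc)
  end.

Definition step3 (u : L * L * L) : L * L * L :=
  let '(x, y, z) := u in (x `|` (y `&` z), y `|` (x `&` z), z `|` (x `&` y)).

Definition hmodular (h : nat) : Prop :=
  forall u : L * L * L, iter h.+1 step3 u = iter h step3 u.
End Defs.

From mathcomp Require Import all_boot all_order.
Import Order.Theory.
Local Open Scope order_scope.

(* Each value of x^(1) is a value of x, or a join of a value of x with a meet of
   two values of x, or the single value x^(1)(c); so x^(1) has finite range when x
   has.  Antitonicity only has to be checked along the chains a_n and b_n, where it
   follows from that of x because joins and meets are monotone. *)

Section FirstIterate.
Context {d : Order.disp_t} {L : bLatticeType d}.
Implicit Types (x : JK -> L) (s : seq L).

Lemma antitone_chains x :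
  (forall n, x (ja n) <= x (ja n.+1)) -> (forall n, x (jb n) <= x (jb n.+1)) ->
  antitone x.
Proof.
move=> step_a step_b [|m|m] [|n|n] //= le_nm.
- exact: (homo_leq le_refl le_trans step_a le_nm).
- exact: (homo_leq le_refl le_trans step_b le_nm).
Qed.

Lemma antitone_x1 x : antitone x -> antitone (x1 x).
Proof.
move=> x_anti.
have step_a n : x (ja n) <= x (ja n.+1) := x_anti (ja n.+1) (ja n) (leqnSn n).
have step_b n : x (jb n) <= x (jb n.+1) := x_anti (jb n.+1) (jb n) (leqnSn n).
apply: antitone_chains => -[|n] /=.
- exact: le_trans (step_a 0) (leUl _ _).
- by apply: leU2; rewrite ?step_a //; apply: leI2; rewrite ?step_b.
- exact: le_trans (step_b 0) (leUl _ _).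
- by apply: leU2; rewrite ?step_b //; apply: leI2; rewrite ?step_a.
Qed.

Definition joins_of_meets s : seq L :=
  [seq a `|` bc | a <- s, bc <- [seq b `&` c | b <- s, c <- s]].

Lemma mem_joins_of_meets s a b c :
  a \in s -> b \in s -> c \in s -> a `|` (b `&` c) \in joins_of_meets s.
Proof. by move=> sa sb sc; apply: allpairs_f => //; apply: allpairs_f. Qed.

Lemma finite_range_x1 x : finite_range x -> finite_range (x1 x).
Proof.
move=> [s x_in_s]; exists (x1 x jc :: s ++ joins_of_meets s).
case=> [|[|n]|[|n]]; rewrite inE mem_cat /= ?eqxx ?x_in_s ?orbT //;
  by rewrite mem_joins_of_meets ?orbT.
Qed.

End FirstIterate.

Theorem lemma5p1 (h : nat) (d : Order.disp_t) (L : bLatticeType d) :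
  (0 < h)%N -> @hmodular d L h ->
  forall x : JK -> L, inA x -> inA (x1 x).
Proof.
move=> _ _ x [x_anti x_fin].
by split; [exact: antitone_x1 | exact: finite_range_x1].
Qed.
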